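(* Every connected bicirculant $B(m;R,S,T)$ with $m\le 5$ is hamiltonian, except for the complete graph $K_2$ and the Petersen graph $G(5,2)$.
   Context: For an integer $m\ge 1$ and subsets $R,S,T\subseteq\mathbb{Z}_m$ with $R=-R$, $T=-T$, $0\notin R\cup T$, $0\in S$ and $|R|=|T|$, the bicirculant $B(m;R,S,T)$ is the graph with vertex set $\{u_0,\dots,u_{m-1}\}\cup\{v_0,\dots,v_{m-1}\}$ and edge set $\{u_iu_{i+j}: i\in\mathbb{Z}_m, j\in R\}\cup\{v_iv_{i+j}: i\in\mathbb{Z}_m, j\in T\}\cup\{u_iv_{i+j}: i\in\mathbb{Z}_m, j\in S\}$ (indices mod $m$). $G(5,2)=B(5;\{1,-1\},\{0\},\{2,-2\})$ and $K_2=B(1;\emptyset,\{0\},\emptyset)$. *)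

From mathcomp Require Import all_boot.
Set Implicit Arguments. Unset Strict Implicit. Unset Printing Implicit Defensive.

(* Arithmetic of Z_m, represented on 'I_m (valid for every m >= 1). *)
Lemma zmod_lt (m : nat) (i : 'I_m) (k : nat) : k %% m < m.
Proof. by rewrite ltn_pmod // (leq_ltn_trans (leq0n _) (ltn_ord i)). Qed.

Definition zadd (m : nat) (i j : 'I_m) : 'I_m := Ordinal (zmod_lt i (i + j)).
Definition zopp (m : nat) (i : 'I_m) : 'I_m := Ordinal (zmod_lt i (m - i)).

Definition symm_set (m : nat) (X : {set 'I_m}) : Prop :=
  forall j : 'I_m, (zopp j \in X) = (j \in X).

(* Vertices of B(m;R,S,T): (false, i) is u_i and (true, i) is v_i. *)
Definition bvert (m : nat) := (bool * 'I_m)%type.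

Definition bicirc_adj (m : nat) (R S T : {set 'I_m}) : rel (bvert m) :=
  fun x y =>
    match x.1, y.1 with
    | false, false => [exists r in R, y.2 == zadd x.2 r]
    | true, true => [exists t in T, y.2 == zadd x.2 t]
    | false, true => [exists s in S, y.2 == zadd x.2 s]
    | true, false => [exists s in S, x.2 == zadd y.2 s]
    end.

Definition gconnected (V : finType) (e : rel V) : Prop :=
  forall x y : V, connect e x y.

Definition hamiltonian (V : finType) (e : rel V) : Prop :=
  exists s : seq V, [/\ uniq s, (forall x : V, x \in s), 3 <= size s & cycle e s].

Definition gisomorphic (V W : finType) (e : rel V) (f : rel W) : Prop :=
  exists g : V -> W, bijective g /\ forall x y : V, f (g x) (g y) = e x y.

Definition K2_adj : rel (bvert 1) :=
  bicirc_adj set0 [set (@ord0 0)] set0.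

Definition petersen_adj : rel (bvert 5) :=
  bicirc_adj [set (inord 1 : 'I_5); inord 4] [set (inord 0 : 'I_5)]
             [set (inord 2 : 'I_5); inord 3].

From mathcomp Require Import all_boot.
Set Implicit Arguments. Unset Strict Implicit. Unset Printing Implicit Defensive.

(* For m <= 5 there are finitely many admissible triples (R, S, T), so the
   theorem is a finite verification.  For every admissible triple, computation
   either exhibits a set of vertices that contains u_0, is closed under
   adjacency and misses some vertex (so the graph is disconnected), or finds a
   Hamiltonian cycle by exhaustive depth-first search, or exhibits an explicit
   isomorphism onto K_2 or G(5,2).  Conversely K_2 has only two vertices, an
   exhaustive search shows that G(5,2) has no Hamiltonian cycle, and being
   Hamiltonian is invariant under isomorphism. *)

(* Unlike [has], short-circuits under vm_compute, which is call-by-value. *)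
Fixpoint has_lazy (T : Type) (a : pred T) (s : seq T) : bool :=
  if s is x :: s' then if a x then true else has_lazy a s' else false.

Lemma has_lazyE (T : Type) (a : pred T) : has_lazy a =1 has a.
Proof. by elim=> //= x s ->; case: (a x). Qed.

Section HamiltonSearch.

Variables (T : eqType) (vs : seq T) (e : rel T) (x0 : T).

(* [visited] is the path built so far, in reverse order, ending at [cur]. *)
Fixpoint ham_search (n : nat) (visited : seq T) (cur : T) : bool :=
  if e cur x0 && all [in visited] vs then true else
  if n is n'.+1 then
    has_lazy (fun v => if v \in visited then false else
                       if e cur v then ham_search n' (v :: visited) v else false) vs
  else false.

Definition ham_completion (visited : seq T) (cur : T) (p : seq T) : Prop :=
  [/\ path e cur p, e (last cur p) x0, uniq (rev visited ++ p),
      {subset p <= vs} & {subset vs <= rev visited ++ p}].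

Lemma ham_completion0 visited cur : uniq visited ->
  reflect (ham_completion visited cur [::]) (e cur x0 && all [in visited] vs).
Proof.
move=> uniq_vis; rewrite /ham_completion cats0.
apply: (iffP andP) => [[close /allP covered] | [_ close _ _ covered]].
  by split; rewrite ?rev_uniq // => v /covered; rewrite mem_rev.
by split=> //; apply/allP => v /covered; rewrite mem_rev.
Qed.

Lemma ham_searchP n visited cur : uniq visited ->
  reflect (exists2 p, size p <= n & ham_completion visited cur p) (ham_search n visited cur).
Proof.
move=> uniq_vis; apply: (iffP idP).
- elim: n visited cur uniq_vis => [|n IH] visited cur uniq_vis /=;
    case: ifP => [/(ham_completion0 cur uniq_vis) finished _ | _ //]; try by exists [::].
  rewrite has_lazyE => /hasP[v vs_v]; case: ifP => // vis_v; case: ifP => // cur_v.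
  case/IH => [|p size_p [path_p last_p uniq_p p_vs vs_p]]; first by rewrite /= vis_v.
  rewrite rev_cons cat_rcons in uniq_p vs_p.
  exists (v :: p) => //; split=> //=; first by rewrite cur_v.
  by move=> w; rewrite inE => /predU1P[-> | /p_vs].
- case=> p; elim: p n visited cur uniq_vis => [|v p IH] n visited cur uniq_vis size_p comp.
    by case: n {size_p} => [|n] /=; rewrite (introT (ham_completion0 cur uniq_vis) comp).
  case: n size_p => // n size_p /=; case: ifP => // _.
  case: comp => /= /andP[cur_v path_p] last_p uniq_p p_vs vs_p.
  have vis_v : v \notin visited.
    by move: uniq_p; rewrite cat_uniq => /and3P[_ /hasPn/(_ v (mem_head _ _))]; rewrite mem_rev.
  rewrite has_lazyE; apply/hasP; exists v; first exact/p_vs/mem_head.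
  rewrite (negbTE vis_v) cur_v; apply: IH; rewrite /= ?vis_v //.
  by split; rewrite ?rev_cons ?cat_rcons // => w wp; apply/p_vs/mem_behead.
Qed.

End HamiltonSearch.

Lemma eq_ham_search_r (T : eqType) (vs1 vs2 : seq T) e x0 n visited cur : vs1 =i vs2 ->
  ham_search vs1 e x0 n visited cur = ham_search vs2 e x0 n visited cur.
Proof.
move=> eq_vs; elim: n visited cur => [|n IH] visited cur /=;
  rewrite (eq_all_r eq_vs) // !has_lazyE (eq_has_r eq_vs).
by under eq_has do rewrite IH.
Qed.

Lemma ham_search_map (T T' : eqType) (f : T -> T') (e : rel T) (e' : rel T') vs x0 n visited cur :
  injective f -> (forall x y, e' (f x) (f y) = e x y) ->
  ham_search (map f vs) e' (f x0) n (map f visited) (f cur) = ham_search vs e x0 n visited cur.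
Proof.
move=> inj_f e'E; have mem_f vis : preim f [in map f vis] =1 [in vis].
  by move=> v /=; rewrite mem_map.
elim: n visited cur => [|n IH] visited cur /=; rewrite e'E all_map (eq_all (mem_f _)) //.
rewrite !has_lazyE has_map; congr (if _ then _ else _).
by apply: eq_has => v /=; rewrite mem_map // e'E -IH.
Qed.

Section FiniteGraphs.

Variables (V : finType) (e : rel V).

Lemma hamiltonian_card : hamiltonian e -> 2 < #|V|.
Proof.
by case=> s [uniq_s _ size_s _]; rewrite (leq_trans size_s) // -(card_uniqP uniq_s) max_card.
Qed.

Lemma hamiltonianP x0 : 2 < #|V| ->
  reflect (hamiltonian e) (ham_search (enum V) e x0 #|V| [:: x0] x0).
Proof.
move=> card_V; apply: (iffP (ham_searchP _ _ _ _ _ _)) => //.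
  case=> p _ [path_p last_p uniq_p _ cover_p].
  have {}cover_p x : x \in x0 :: p by apply/cover_p/mem_enum.
  exists (x0 :: p); split=> //.
  - by rewrite (leq_trans card_V) // cardE uniq_leq_size ?enum_uniq.
  - by rewrite /= rcons_path path_p.
case=> s [uniq_s all_s size_s cycle_s]; case/rot_to: (all_s x0) => i p rot_s.
move: cycle_s; rewrite -(rot_cycle i) rot_s /= rcons_path => /andP[path_p last_p].
have uniq_p : uniq (x0 :: p) by rewrite -rot_s rot_uniq.
exists p; last by split=> // x _ /=; rewrite ?mem_enum // -rot_s mem_rot.
apply: leq_trans (leqnSn _) (leq_trans _ (max_card (mem (x0 :: p)))).
by rewrite (card_uniqP uniq_p).
Qed.

Lemma forward_closed_connect (C : pred V) x y :
  (forall u v, u \in C -> e u v -> v \in C) -> x \in C -> connect e x y -> y \in C.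
Proof.
move=> closedC Cx /connectP[p + ->]; elim: p x Cx => //= z p IH x Cx /andP[exz].
exact/IH/(closedC x).
Qed.

End FiniteGraphs.

Lemma hamiltonian_gisomorphic (V W : finType) (e : rel V) (f : rel W) :
  gisomorphic e f -> hamiltonian e -> hamiltonian f.
Proof.
move=> [g [[g' gK g'K] gE]] [s [uniq_s all_s size_s cycle_s]].
exists (map g s); split; rewrite ?size_map //.
- by rewrite map_inj_uniq //; apply: can_inj gK.
- by move=> x; rewrite -(g'K x) map_f.
- by rewrite cycle_map (@eq_cycle _ _ e) // => x y; rewrite /= gE.
Qed.

(* Finite sets over 'I_m do not reduce under vm_compute, so for computation a
   bicirculant is re-encoded on bool * nat, its adjacency being read off from
   bit sequences of length m. *)
Definition cvert := (bool * nat)%type.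

Definition cverts (m : nat) : seq cvert :=
  [seq (b, i) | b <- [:: false; true], i <- iota 0 m].

Definition encv (m : nat) (x : bvert m) : cvert := (x.1, val x.2).

Definition decv (m : nat) (i0 : 'I_m) (v : cvert) : bvert m := (v.1, insubd i0 v.2).

Lemma mem_cverts m v : (v \in cverts m) = (v.2 < m).
Proof.
case: v => b i; apply/allpairsP/idP => [[[c j] /= [_ + [_ ->]]] | lt_im].
  by rewrite mem_iota.
by exists (b, i); rewrite /= mem_iota lt_im; case: b {lt_im}.
Qed.

Lemma encv_inj m : injective (@encv m).
Proof. by case=> [b i] [c j] [-> /val_inj ->]. Qed.

Lemma decvK m (i0 : 'I_m) : {in cverts m, cancel (decv i0) (@encv m)}.
Proof. by move=> [b i]; rewrite mem_cverts => lt_im; rewrite /encv /decv /= insubdK. Qed.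

Lemma encv_cverts m (x : bvert m) : encv x \in cverts m.
Proof. by rewrite mem_cverts ltn_ord. Qed.

Lemma cverts_codom m : cverts m =i codom (@encv m).
Proof.
case=> b i; rewrite mem_cverts; apply/idP/codomP => [lt_im | [x [-> ->]]] //=.
by exists (b, Ordinal lt_im).
Qed.

Definition encodes (m : nat) (e : rel (bvert m)) (ec : rel cvert) : Prop :=
  forall x y, e x y = ec (encv x) (encv y).

Definition cstep (p : pred nat) (m i j : nat) : bool :=
  has (fun k => p k && (j == (i + k) %% m)) (iota 0 m).

Definition cbicirc (m : nat) (r s t : pred nat) : rel cvert := fun x y =>
  match x.1, y.1 with
  | false, false => cstep r m x.2 y.2
  | true, true => cstep t m x.2 y.2
  | false, true => cstep s m x.2 y.2
  | true, false => cstep s m y.2 x.2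
  end.

Lemma cstepE m (X : {set 'I_m}) (p : pred nat) (i j : 'I_m) :
  (forall k : 'I_m, p k = (k \in X)) -> [exists k in X, j == zadd i k] = cstep p m i j.
Proof.
move=> pX; apply/existsP/hasP => [[k /andP[Xk /eqP ->]] | [k]].
  by exists (val k); rewrite ?mem_iota ?pX ?Xk /=.
rewrite mem_iota => /andP[_ lt_km] /andP[pk /eqP ij].
by exists (Ordinal lt_km); rewrite -pX pk; apply/eqP/val_inj.
Qed.

Lemma encodes_bicirc m (R S T : {set 'I_m}) (r s t : pred nat) :
  (forall i : 'I_m, r i = (i \in R)) -> (forall i : 'I_m, s i = (i \in S)) ->
  (forall i : 'I_m, t i = (i \in T)) -> encodes (bicirc_adj R S T) (cbicirc m r s t).
Proof. by move=> rR sS tT [[] i] [[] j]; apply: cstepE. Qed.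

Definition chamiltonian (m : nat) (ec : rel cvert) : bool :=
  ham_search (cverts m) ec (false, 0) m.*2 [:: (false, 0)] (false, 0).

Definition iso_cert (m : nat) (ec fc : rel cvert) (g g' : cvert -> cvert) : bool :=
  all (fun v => (g v \in cverts m) && (g' (g v) == v)) (cverts m) &&
  all (fun v => all (fun w => fc (g v) (g w) == ec v w) (cverts m)) (cverts m).

Definition cut_by (m : nat) (ec : rel cvert) (C : seq cvert) : bool :=
  [&& (false, 0) \in C,
      all (fun u => (u \in C) ==> all (fun v => ec u v ==> (v \in C)) (cverts m)) (cverts m)
    & ~~ all [in C] (cverts m)].

Section Transfer.

Variables (m : nat) (e : rel (bvert m)) (ec : rel cvert).
Hypothesis e_ec : encodes e ec.

Lemma hamiltonian_encodedP : 1 < m -> reflect (hamiltonian e) (chamiltonian m ec).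
Proof.
move=> m_gt1; have card_V : #|{: bvert m}| = m.*2 by rewrite card_prod card_bool card_ord mul2n.
pose x0 : bvert m := (false, Ordinal (ltnW m_gt1)).
rewrite /chamiltonian -card_V -[(false, 0)]/(encv x0).
rewrite (eq_ham_search_r _ _ _ _ _ (cverts_codom m)) codomE.
rewrite -[[:: encv x0]]/(map (@encv m) [:: x0]) (ham_search_map (e := e)).
- by apply: hamiltonianP; rewrite card_V -[2]/(1.*2) ltn_double.
- exact: encv_inj.
- by move=> x y; rewrite e_ec.
Qed.

Lemma gisomorphic_cert (f : rel (bvert m)) fc g g' :
  encodes f fc -> iso_cert m ec fc g g' -> gisomorphic e f.
Proof.
move=> f_fc /andP[/allP g_ok /allP gE].
pose G (x : bvert m) := decv x.2 (g (encv x)).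
have encvG x : encv (G x) = g (encv x).
  by apply: decvK; case/andP: (g_ok _ (encv_cverts x)).
exists G; split.
  apply: injF_bij => x y /(congr1 (@encv m)); rewrite !encvG => /(congr1 g').
  case/andP: (g_ok _ (encv_cverts x)) => _ /eqP ->.
  by case/andP: (g_ok _ (encv_cverts y)) => _ /eqP -> /encv_inj.
by move=> x y; rewrite f_fc !encvG e_ec; apply/eqP/(allP (gE _ (encv_cverts x)))/encv_cverts.
Qed.

Lemma connected_no_cut (C : seq cvert) : 0 < m -> gconnected e -> ~~ cut_by m ec C.
Proof.
move=> m_gt0 conn; apply/and3P => -[C0 /allP closedC]; apply/negP; rewrite negbK.
apply/allP => _ /[!cverts_codom] /codomP[y ->].
pose x0 : bvert m := (false, Ordinal m_gt0).
apply: (forward_closed_connect (C := [pred x | encv x \in C])) (conn x0 y) => // u v /= Cu.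
rewrite e_ec; move/implyP: (closedC _ (encv_cverts u)) => /(_ Cu) /allP.
by move/(_ _ (encv_cverts v))/implyP.
Qed.

End Transfer.

Definition cK2 : rel cvert := cbicirc 1 pred0 (pred1 0) pred0.

Definition cpetersen : rel cvert := cbicirc 5 [in [:: 1; 4]] (pred1 0) [in [:: 2; 3]].

Lemma encodes_K2 : encodes K2_adj cK2.
Proof. by apply: encodes_bicirc => i; rewrite !inE -?val_eqE. Qed.

Lemma encodes_petersen : encodes petersen_adj cpetersen.
Proof. by apply: encodes_bicirc => i; rewrite !inE -!val_eqE /= ?inordK. Qed.

Lemma K2_not_hamiltonian : ~ hamiltonian K2_adj.
Proof. by move/hamiltonian_card; rewrite card_prod card_bool card_ord. Qed.

Lemma petersen_not_hamiltonian : ~ hamiltonian petersen_adj.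
Proof. by move/(hamiltonian_encodedP encodes_petersen isT); vm_compute. Qed.

(* (b, i) |-> (b (+) c, i - k on the v-side) sends S = {k} to {0}; for c = true
   it also exchanges the u-cycle and the v-cycle. *)
Definition relabel (c : bool) (k : nat) (v : cvert) : cvert :=
  (v.1 (+) c, if v.1 then (v.2 + 5 - k) %% 5 else v.2).

Definition relabel_inv (c : bool) (k : nat) (v : cvert) : cvert :=
  (v.1 (+) c, if v.1 (+) c then (v.2 + k) %% 5 else v.2).

Definition creach (m : nat) (ec : rel cvert) : seq cvert :=
  iter m.*2 (fun C => [seq v <- cverts m | (v \in C) || has (ec^~ v) C]) [:: (false, 0)].

Definition classified (m : nat) (ec : rel cvert) : bool :=
  [|| cut_by m ec (creach m ec),
      (1 < m) && chamiltonian m ec,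
      (m == 1) && iso_cert 1 ec cK2 id id
    | (m == 5) && has (fun c => has (fun k =>
         iso_cert 5 ec cpetersen (relabel c k) (relabel_inv c k)) (iota 0 5)) [:: false; true]].

Lemma classified_sound m (e : rel (bvert m)) ec : 0 < m ->
  encodes e ec -> gconnected e -> classified m ec ->
  [\/ hamiltonian e, gisomorphic e K2_adj | gisomorphic e petersen_adj].
Proof.
move=> m_gt0 e_ec conn; case/or4P.
- by move/negP: (connected_no_cut e_ec (creach m ec) m_gt0 conn).
- by case/andP=> m_gt1 /(hamiltonian_encodedP e_ec m_gt1); constructor 1.
- by case/andP=> /eqP m1; subst m => /(gisomorphic_cert e_ec encodes_K2); constructor 2.
case/andP=> /eqP m5; subst m => /hasP[c _ /hasP[k _]].
by move/(gisomorphic_cert e_ec encodes_petersen); constructor 3.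
Qed.

Fixpoint bool_seqs (n : nat) : seq (seq bool) :=
  if n is n'.+1 then [seq b :: l | b <- [:: true; false], l <- bool_seqs n'] else [:: [::]].

Lemma mem_bool_seqs (l : seq bool) : l \in bool_seqs (size l).
Proof. by elim: l => // b l IH; apply/allpairsP; exists (b, l); case: b. Qed.

Definition csymm (m : nat) (l : seq bool) : bool :=
  all (fun j => nth false l ((m - j) %% m) == nth false l j) (iota 0 m).

Definition admissible (m : nat) (lR lS lT : seq bool) : bool :=
  [&& csymm m lR, csymm m lT, ~~ nth false lR 0, ~~ nth false lT 0, nth false lS 0
    & count id lR == count id lT].

(* [if] rather than [==>], since vm_compute evaluates both operands of [==>]. *)
Definition census (m : nat) : bool :=
  all (fun lR => all (fun lS => all (fun lT =>
    if admissible m lR lS lT then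
      classified m (cbicirc m (nth false lR) (nth false lS) (nth false lT))
    else true) (bool_seqs m)) (bool_seqs m)) (bool_seqs m).

Lemma census_small : all census (iota 1 5).
Proof. by vm_compute. Qed.

Definition char_seq (m : nat) (X : {set 'I_m}) : seq bool := [seq i \in X | i <- enum 'I_m].

Lemma nth_char_seq m (X : {set 'I_m}) (i : 'I_m) : nth false (char_seq X) i = (i \in X).
Proof. by rewrite (nth_map i) ?size_enum_ord // nth_ord_enum. Qed.

Lemma char_seq_bool_seqs m (X : {set 'I_m}) : char_seq X \in bool_seqs m.
Proof. by rewrite -[m in bool_seqs m]size_enum_ord -(size_map (mem X)) mem_bool_seqs. Qed.

Lemma count_char_seq m (X : {set 'I_m}) : count id (char_seq X) = #|X|.
Proof. by rewrite count_map enumT cardE /enum_mem size_filter. Qed.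

Lemma csymm_char_seq m (X : {set 'I_m}) : symm_set X -> csymm m (char_seq X).
Proof.
move=> symX; apply/allP => j; rewrite mem_iota => /andP[_ lt_jm].
by rewrite (nth_char_seq X (Ordinal lt_jm)) -symX -(nth_char_seq X).
Qed.

Lemma admissible_char_seq m (hm : 0 < m) (R S T : {set 'I_m}) :
  symm_set R -> symm_set T -> Ordinal hm \notin R -> Ordinal hm \notin T ->
  Ordinal hm \in S -> #|R| = #|T| -> admissible m (char_seq R) (char_seq S) (char_seq T).
Proof.
move=> symR symT R0 T0 S0 RT; rewrite /admissible !csymm_char_seq // !count_char_seq RT eqxx.
by rewrite !(nth_char_seq _ (Ordinal hm)) R0 T0 S0.
Qed.

Lemma census_classified m (R S T : {set 'I_m}) : census m ->
  admissible m (char_seq R) (char_seq S) (char_seq T) ->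
  classified m (cbicirc m (nth false (char_seq R)) (nth false (char_seq S))
                          (nth false (char_seq T))).
Proof.
move=> /allP/(_ _ (char_seq_bool_seqs R))/allP/(_ _ (char_seq_bool_seqs S)).
by move=> /allP/(_ _ (char_seq_bool_seqs T)) + adm; rewrite adm.
Qed.

Theorem lemma3p1 (m : nat) (hm : 0 < m) (R S T : {set 'I_m}) :
  m <= 5 ->
  symm_set R -> symm_set T ->
  Ordinal hm \notin R -> Ordinal hm \notin T ->
  Ordinal hm \in S ->
  #|R| = #|T| ->
  gconnected (bicirc_adj R S T) ->
  (hamiltonian (bicirc_adj R S T) <->
     ~ gisomorphic (bicirc_adj R S T) K2_adj /\
     ~ gisomorphic (bicirc_adj R S T) petersen_adj).
Proof.
move=> le_m5 symR symT R0 T0 S0 RT conn.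
split=> [ham | [not_K2 not_petersen]].
  split=> /hamiltonian_gisomorphic/(_ ham);
    [exact: K2_not_hamiltonian | exact: petersen_not_hamiltonian].
have e_ec := encodes_bicirc (nth_char_seq R) (nth_char_seq S) (nth_char_seq T).
have census_m : census m by apply: (allP census_small); rewrite mem_iota hm ltnS.
have := census_classified census_m (admissible_char_seq symR symT R0 T0 S0 RT).
by case/(classified_sound hm e_ec conn).
Qed.
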